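(* Let $F:\mathbb{R}\to[0,1]$ be a distribution function with Lebesgue–Stieltjes measure $\mu_F$, let $0<\lambda\le1$ and $\alpha\in(0,1)$, and put $\xi=F^{\wedge}(\alpha)$, $\eta=F^{\vee}(\alpha)$. Then $A^{+}_{\lambda,\alpha}=\{x\in\mathbb{R}:x>\xi,\ F_\lambda(x)\le\alpha\}$ is a Borel set and $\mu_F(A^{+}_{\lambda,\alpha})=0$. In particular, if $\xi<\eta$, then $\mu_F(\{x\in\mathbb{R}:F(x)=\alpha\})=\Delta F(\xi)=\alpha-F(\xi-)$.
   Context: A distribution function is a non-decreasing, right-continuous $F:\mathbb{R}\to[0,1]$ with limits $0$ at $-\infty$ and $1$ at $+\infty$. $\mu_F$ is the unique Borel measure on $\mathbb{R}$ with $\mu_F((x,y])=F(y)-F(x)$. $F(x-)=\lim_{z\uparrow x}F(z)$, $\Delta F(x)=F(x)-F(x-)$, $F_\lambda(x)=F(x-)+\lambda\Delta F(x)$. $F^{\wedge}(\alpha)=\inf\{x:F(x)\ge\alpha\}$, $F^{\vee}(\alpha)=\inf\{x:F(x)>\alpha\}$. *)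

From HB Require Import structures.
From mathcomp Require Import all_boot all_order all_algebra.
From mathcomp Require Import all_classical all_reals all_analysis.
Set Implicit Arguments. Unset Strict Implicit. Unset Printing Implicit Defensive.
Import Order.TTheory GRing.Theory Num.Theory.
Import numFieldNormedType.Exports.
Local Open Scope classical_set_scope.
Local Open Scope ring_scope.

Definition distribution_function (R : realType) (F : R -> R) : Prop :=
  [/\ (forall x y, x <= y -> F x <= F y),
      (forall x, (F y @[y --> x^'+]) --> F x),
      (forall x, 0 <= F x <= 1),
      ((F x @[x --> -oo]) --> (0:R))
    & ((F x @[x --> +oo]) --> (1:R))].

(* mu is the Lebesgue-Stieltjes measure of F : mu((x,y]) = F y - F x
   (a Borel measure on R; such a measure is unique). *)
Definition is_LS_measure (R : realType) (F : R -> R)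
    (mu : {measure set (measurableTypeR R) -> \bar R}) : Prop :=
  forall x y : R, x <= y -> mu [set` `]x, y]] = (F y - F x)%:E.

Definition Fminus (R : realType) (F : R -> R) (x : R) : R :=
  lim (F y @[y --> x^'-]).

Definition DeltaF (R : realType) (F : R -> R) (x : R) : R :=
  F x - Fminus F x.

Definition Flam (R : realType) (F : R -> R) (lambda x : R) : R :=
  Fminus F x + lambda * DeltaF F x.

Definition Fwedge (R : realType) (F : R -> R) (alpha : R) : R :=
  inf [set x | alpha <= F x].

Definition Fvee (R : realType) (F : R -> R) (alpha : R) : R :=
  inf [set x | alpha < F x].

Definition Aplus (R : realType) (F : R -> R) (lambda alpha : R)
  : set (measurableTypeR R) :=
  [set x | Fwedge F alpha < x /\ Flam F lambda x <= alpha].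

From HB Require Import structures.
From mathcomp Require Import all_boot all_order all_algebra.
From mathcomp Require Import all_classical all_reals all_analysis.
From mathcomp Require Import lra measurable_realfun.
Set Implicit Arguments.
Unset Strict Implicit.
Unset Printing Implicit Defensive.
Import Order.TTheory GRing.Theory Num.Theory.
Import numFieldNormedType.Exports.
Local Open Scope classical_set_scope.
Local Open Scope ring_scope.

(* Right of xi the left limit of F is already >= alpha, so F_lambda(x) <= alpha
   forces F to equal alpha at x: A^+ is the part of the level set {F = alpha}
   lying right of xi.  That part sits in ]xi, eta], on which F is constant, so
   its mu_F-mass is an increment F z - F xi = 0.  When xi < eta, F xi = alpha
   and the level set is A^+ plus the atom at xi, of mass Delta F(xi). *)

Lemma set1_bigcap_itv_oc (R : realType) (x : R) :
  [set x] = \bigcap_n [set` `]x - n.+1%:R^-1, x]].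
Proof.
apply/seteqP; split => [_ -> n _|y yI] /=.
  by rewrite in_itv /= lexx andbT ltrBlDr ltrDl invr_gt0.
have /= := yI 0%N I; rewrite in_itv /= => /andP[_ yx].
apply/eqP; rewrite eq_le yx /= leNgt; apply/negP => /ltr_add_invr[n ynx].
by have /= := yI n I; rewrite in_itv /= ltrBlDr ltNge (ltW ynx).
Qed.

Section nondecreasing.
Variables (R : realType) (F : R -> R).
Hypothesis ndF : forall x y, x <= y -> F x <= F y.

Lemma cvg_at_left_nondecreasing x : cvg (F y @[y --> x^'-]).
Proof.
apply: nondecreasing_at_left_is_cvgr.
- by near=> z => a b _ _ ab; exact: ndF.
- near=> z; exists (F x) => _ [y /= + <-]; rewrite in_itv /= => /andP[_ /ltW].
  exact: ndF.
Unshelve. all: by end_near.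
Qed.

Lemma Fminus_le x : Fminus F x <= F x.
Proof.
apply: limr_le; first exact: cvg_at_left_nondecreasing.
near=> y; apply: ndF; near: y; exact: nbhs_left_le.
Unshelve. all: by end_near.
Qed.

Lemma le_Fminus z x : z < x -> F z <= Fminus F x.
Proof.
move=> zx; apply: limr_ge; first exact: cvg_at_left_nondecreasing.
near=> y; apply: ndF; near: y; exact: nbhs_left_ge.
Unshelve. all: by end_near.
Qed.

Lemma Flam_le_iff lambda a x : 0 < lambda -> a <= Fminus F x ->
  Flam F lambda x <= a <-> F x = a.
Proof.
move=> l0 aFm; have := Fminus_le x; rewrite /Flam /DeltaF.
set m := Fminus F x in aFm *; move=> mF; split => [Fla|Fxa].
- by apply/eqP; rewrite eq_le; apply/andP; split; nra.
- have -> : m = a by lra.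
  by rewrite Fxa subrr mulr0 addr0.
Qed.

Lemma measurable_level_set_gt (a c : R) :
  measurable ([set x | a < x /\ F x = c] : set (measurableTypeR R)).
Proof.
have -> : [set x | a < x /\ F x = c] = `]a, +oo[ `&` (setT `&` F @^-1` [set c]).
  by apply/seteqP; split => x /=; rewrite in_itv /= andbT => -[// ? []].
apply: measurableI; first exact: measurable_itv.
by apply: (nondecreasing_measurable measurableT ndF) => //; exact: measurable_set1.
Qed.

End nondecreasing.

Section LS_measure.
Variables (R : realType) (F : R -> R).
Variable mu : {measure set (measurableTypeR R) -> \bar R}.
Hypothesis ndF : forall x y, x <= y -> F x <= F y.
Hypothesis LS : is_LS_measure F mu.

Lemma LS_measure_itv_oc_null x z : F z <= F x -> mu [set` `]x, z]] = 0%E.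
Proof.
move=> Fzx; have [zx|xz] := leP z x.
  by rewrite set_itv_ge ?measure0 // bnd_simp -leNgt.
rewrite LS ?ltW //; have := ndF (ltW xz) => Fxz.
by have -> : F z - F x = 0 by lra.
Qed.

Lemma LS_measure_itv_oo_null x z :
  (forall y, y < z -> F y <= F x) -> mu [set` `]x, z[] = 0%E.
Proof.
move=> Fzx; apply/negligibleP; first exact: measurable_itv.
rewrite itv_bnd_open_bigcup; apply: negligible_bigcup => n.
apply/negligibleP; first exact: measurable_itv.
by apply/LS_measure_itv_oc_null/Fzx; rewrite ltrBlDr ltrDl invr_gt0.
Qed.

Lemma LS_measure_set1 (x : R) : mu [set x] = (DeltaF F x)%:E.
Proof.
pose u n := x - n.+1%:R^-1.
have ux n : u n < x by rewrite /u ltrBlDr ltrDl invr_gt0.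
pose G n : set (measurableTypeR R) := [set` `]u n, x]].
have mu_G : mu \o G @ \oo --> mu [set x].
  rewrite [[set x]]set1_bigcap_itv_oc; apply: nonincreasing_cvg_mu.
  - by rewrite /G LS ?ltW // ltey.
  - by move=> n; exact: measurable_itv.
  - by rewrite -set1_bigcap_itv_oc; exact: measurable_set1.
  - move=> n m nm; apply/subsetPset => y; rewrite /G /= !in_itv /=.
    move=> /andP[uny ->]; rewrite andbT; apply: le_lt_trans uny.
    by rewrite /u lerB // lef_pV2 ?posrE // ler_nat.
have Fu : F (u n) @[n --> \oo] --> Fminus F x.
  have := cvg_at_left_nondecreasing ndF (x := x).
  move/cvg_at_leftP; apply.
  split=> //; rewrite -[X in _ --> X]subr0.
  exact: cvgB (cvg_cst _) cvg_harmonic.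
have mu_G' : mu \o G @ \oo --> (DeltaF F x)%:E.
  have -> : mu \o G = fun n => (F x - F (u n))%:E.
    by apply: funext => n; rewrite /= /G LS // ltW.
  exact/cvg_EFin/(cvgB (cvg_cst _) Fu)/nearW.
exact: cvg_unique mu_G mu_G'.
Qed.

End LS_measure.

Section quantiles.
Variables (R : realType) (F : R -> R) (alpha : R).
Hypothesis ndF : forall x y, x <= y -> F x <= F y.
Hypothesis rcF : forall x, (F y @[y --> x^'+]) --> F x.
Hypothesis Fmo : (F x @[x --> -oo]) --> (0:R).
Hypothesis Fpo : (F x @[x --> +oo]) --> (1:R).
Hypothesis a0 : 0 < alpha.
Hypothesis a1 : alpha < 1.

Let S := [set x | alpha <= F x].
Let T := [set x | alpha < F x].

Lemma quantile_set_lbound : has_lbound S.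
Proof.
have [M [_ FM]] := cvgr_lt _ Fmo _ a0.
by exists M => x Sx; rewrite leNgt; apply/negP => /FM; rewrite /S /= in Sx; lra.
Qed.

Lemma quantile_set_neq0 : T !=set0.
Proof.
have [M [_ FM]] := cvgr_gt _ Fpo _ a1.
by exists (M + 1); apply: FM; lra.
Qed.

Lemma lt_Fwedge x : x < Fwedge F alpha -> F x < alpha.
Proof.
move=> xxi; rewrite ltNge; apply/negP => Sx.
by have := ge_inf quantile_set_lbound Sx; rewrite -/(Fwedge F alpha); lra.
Qed.

Lemma lt_Fvee x : x < Fvee F alpha -> F x <= alpha.
Proof.
have lbT : has_lbound T.
  by have [M lbM] := quantile_set_lbound; exists M => y /ltW; exact: lbM.
move=> xeta; rewrite leNgt; apply/negP => Tx.
by have := ge_inf lbT Tx; rewrite -/(Fvee F alpha); lra.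
Qed.

Lemma gt_Fvee x : Fvee F alpha < x -> alpha < F x.
Proof.
move=> etax; have [t Tt tx] := inf_lt quantile_set_neq0 etax.
by have := ndF (ltW tx); rewrite /T /= in Tt; lra.
Qed.

Lemma le_F_Fwedge : alpha <= F (Fwedge F alpha).
Proof.
have neS : S !=set0 by have [t Tt] := quantile_set_neq0; exists t; apply: ltW.
have rc_xi := @rcF (Fwedge F alpha).
rewrite -(cvg_lim _ rc_xi) //; apply: limr_ge.
  by apply/cvg_ex; exists (F (Fwedge F alpha)).
near=> y; have xiy : Fwedge F alpha < y by near: y; exact: nbhs_right_gt.
have [s Ss sy] := inf_lt neS xiy.
by have := ndF (ltW sy); rewrite /S /= in Ss; lra.
Unshelve. all: by end_near.
Qed.

Lemma Aplus_level_set (lambda : R) : 0 < lambda ->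
  Aplus F lambda alpha = [set x | Fwedge F alpha < x /\ F x = alpha].
Proof.
move=> l0; apply/seteqP; split => x /= [xix];
  have aFm := le_trans le_F_Fwedge (le_Fminus ndF xix);
  by move/(Flam_le_iff ndF l0 aFm).
Qed.

Lemma level_set_right_of_Fwedge_null (mu : {measure set (measurableTypeR R) -> \bar R}) :
  is_LS_measure F mu ->
  mu [set x | Fwedge F alpha < x /\ F x = alpha] = 0%E.
Proof.
move=> LS; set A := [set x | _ /\ _].
have A_le_eta x : A x -> x <= Fvee F alpha.
  by move=> [_ Fx]; rewrite leNgt; apply/negP => /gt_Fvee; lra.
have [[xieta Feta]|Aeta] := pselect (A (Fvee F alpha)).
  apply: (subset_measure0 (measurable_level_set_gt ndF _ _)
    (measurable_itv `]Fwedge F alpha, Fvee F alpha])).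
  - by move=> x Ax; rewrite /= in_itv /= A_le_eta // andbT; case: Ax.
  - by apply: (LS_measure_itv_oc_null ndF LS); rewrite Feta le_F_Fwedge.
apply: (subset_measure0 (measurable_level_set_gt ndF _ _)
  (measurable_itv `]Fwedge F alpha, Fvee F alpha[)).
- move=> x Ax; rewrite /= in_itv /=; case: (Ax) => -> _ /=.
  rewrite lt_neqAle A_le_eta // andbT.
  by apply/eqP => xeta; apply: Aeta; rewrite -xeta.
- apply: (LS_measure_itv_oo_null ndF LS) => y /lt_Fvee Fy.
  exact: le_trans Fy le_F_Fwedge.
Qed.

End quantiles.

Theorem mainTheorem5 (R : realType) (F : R -> R)
    (mu : {measure set (measurableTypeR R) -> \bar R})
    (lambda alpha : R) :
  distribution_function F -> is_LS_measure F mu ->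
  0 < lambda <= 1 -> 0 < alpha < 1 ->
  let xi := Fwedge F alpha in
  let eta := Fvee F alpha in
  [/\ measurable (Aplus F lambda alpha),
      mu (Aplus F lambda alpha) = 0%E
    & xi < eta ->
      mu [set x : measurableTypeR R | F x = alpha] = (DeltaF F xi)%:E /\
      DeltaF F xi = alpha - Fminus F xi].
Proof.
move=> [ndF rcF _ Fmo Fpo] LS /andP[l0 _] /andP[a0 a1] xi eta.
rewrite Aplus_level_set //; split.
- exact: measurable_level_set_gt.
- exact: level_set_right_of_Fwedge_null.
move=> xieta.
have Fxi : F xi = alpha.
  by have := lt_Fvee Fmo a0 xieta; have := le_F_Fwedge ndF rcF Fpo a1; lra.
pose A := [set x : measurableTypeR R | xi < x /\ F x = alpha].
have -> : [set x : measurableTypeR R | F x = alpha] = [set xi] `|` A.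
  apply/seteqP; split => [x /= Fx|x [/= ->|[]] //].
  have [xxi|xix|->] := ltgtP x xi; [|by right|by left].
  by have := lt_Fwedge Fmo a0 xxi; lra.
have muU : mu ([set xi] `|` A) = (mu [set xi] + mu A)%E.
  apply: measureU; [exact: measurable_set1|exact: measurable_level_set_gt|].
  by apply/seteqP; split => x // [/= -> []]; rewrite ltxx.
have A0 : mu A = 0%E by exact: level_set_right_of_Fwedge_null.
by rewrite muU A0 adde0 (LS_measure_set1 ndF LS) /DeltaF Fxi.
Qed.
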